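(* Let $A_1,\ldots,A_m\in\mathbb{R}^{n\times n}$ with $\mathrm{JSR}(\{A_i\}_{i=1}^m)<1$, and let $c:\mathbb{R}^n\to\mathbb{R}_{\geq0}$ be Lipschitz continuous (with respect to the Euclidean norm) on a neighborhood $X\subseteq\mathbb{R}^n$ of the origin, with Lipschitz constant $L$. Let $\rho<1$ and let $\lVert\cdot\rVert_*$ be a norm on $\mathbb{R}^n$ such that for every solution $\xi$ of $\xi(t+1)=A_{\sigma(t)}\xi(t)$ (for any switching signal $\sigma$) and all $t\in\mathbb{N}$, $\lVert\xi(t)\rVert_*\leq\rho^t\lVert\xi(0)\rVert_*$. Let $\eta>0$ be such that $B_*(\eta):=\{x\in\mathbb{R}^n:\lVert x\rVert_*\leq\eta\}\subseteq X$. Then the optimal value function $J^\star$ and the worst-case value function $J^\circ$ are Lipschitz continuous on $B_*(\eta)$ (with respect to the Euclidean norm), with Lipschitz constant $M=\kappa(\lVert\cdot\rVert_* )L/(1-\rho)$.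
   Context: A discrete-time switched linear system $\{A_i\}_{i=1}^m$ is $\xi(t+1)=A_{\sigma(t)}\xi(t)$, $t\in\mathbb{N}$, with switching signal $\sigma:\mathbb{N}\to\{1,\ldots,m\}$; $\xi(t,x,\sigma)$ denotes the solution at time $t$ with $\xi(0)=x$. The joint spectral radius $\mathrm{JSR}(\{A_i\})$ is the infimum of $r\geq0$ such that there is $C\geq0$ with $\lVert\xi(t)\rVert\leq Cr^t\lVert\xi(0)\rVert$ for all solutions and all $t$. Given a cost $c:\mathbb{R}^n\to\mathbb{R}_{\geq0}$, $J(x,\sigma)=\sum_{t=0}^\infty c(\xi(t,x,\sigma))$, $J^\star(x)=\inf_\sigma J(x,\sigma)$ (optimal value function) and $J^\circ(x)=\sup_\sigma J(x,\sigma)$ (worst-case value function). $\lVert\cdot\rVert$ is the Euclidean norm, and for a norm $\lVert\cdot\rVert'$ its eccentricity is $\kappa(\lVert\cdot\rVert')=\max_{\lVert x\rVert=1}\lVert x\rVert'/\min_{\lVert x\rVert=1}\lVert x\rVert'$. *)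

From HB Require Import structures.
From mathcomp Require Import all_boot all_order all_algebra.
From mathcomp Require Import all_classical all_reals all_analysis.
Set Implicit Arguments. Unset Strict Implicit. Unset Printing Implicit Defensive.
Import Order.TTheory GRing.Theory Num.Theory.
Local Open Scope classical_set_scope.
Local Open Scope ring_scope.

Definition euclid {R : realType} {n : nat} (x : 'cV[R]_n) : R :=
  Num.sqrt (\sum_(i < n) (x i 0) ^+ 2).

Definition is_norm {R : realType} {n : nat} (N : 'cV[R]_n -> R) : Prop :=
  [/\ forall x, N x = 0 -> x = 0,
      forall (a : R) x, N (a *: x) = `|a| * N x &
      forall x y, N (x + y) <= N x + N y].

Fixpoint traj {R : realType} {n m : nat} (A : 'I_m -> 'M[R]_n)
  (sigma : nat -> 'I_m) (x : 'cV[R]_n) (t : nat) : 'cV[R]_n :=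
  match t with
  | 0%N => x
  | t'.+1 => A (sigma t') *m traj A sigma x t'
  end.

Definition JSR {R : realType} {n m : nat} (A : 'I_m -> 'M[R]_n) : R :=
  inf [set r : R | 0 <= r /\ exists C : R, 0 <= C /\
        forall (sigma : nat -> 'I_m) (x : 'cV[R]_n) (t : nat),
          euclid (traj A sigma x t) <= C * r ^+ t * euclid x].

Definition kappa {R : realType} {n : nat} (N : 'cV[R]_n -> R) : R :=
  sup [set N x | x in [set x : 'cV[R]_n | euclid x = 1]] /
  inf [set N x | x in [set x : 'cV[R]_n | euclid x = 1]].

Definition Jcost {R : realType} {n m : nat} (A : 'I_m -> 'M[R]_n)
  (c : 'cV[R]_n -> R) (x : 'cV[R]_n) (sigma : nat -> 'I_m) : \bar R :=
  (\sum_(0 <= t <oo) (c (traj A sigma x t))%:E)%E.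

Definition Jstar {R : realType} {n m : nat} (A : 'I_m -> 'M[R]_n)
  (c : 'cV[R]_n -> R) (x : 'cV[R]_n) : \bar R :=
  ereal_inf [set Jcost A c x sigma | sigma in [set: nat -> 'I_m]].

Definition Jcirc {R : realType} {n m : nat} (A : 'I_m -> 'M[R]_n)
  (c : 'cV[R]_n -> R) (x : 'cV[R]_n) : \bar R :=
  ereal_sup [set Jcost A c x sigma | sigma in [set: nat -> 'I_m]].

From HB Require Import structures.
From mathcomp Require Import all_boot all_order all_algebra.
From mathcomp Require Import all_classical all_reals all_analysis.
From mathcomp Require Import ring lra.

(* For a fixed switching signal the dynamics is linear, so the trajectories
   from x and y differ by the trajectory from x - y.  The norm Nst contracts
   along every trajectory, so both trajectories stay in the ball
   {Nst <= eta}, where c is L-Lipschitz, and comparing Nst with the Euclidean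
   norm through its eccentricity gives |xi(t, x - y)| <= kappa rho^t |x - y|.
   Summing |c(xi(t, x)) - c(xi(t, y))| <= L kappa rho^t |x - y| over t yields
   J(x, sigma) <= J(y, sigma) + M |x - y| for every sigma, an inequality that
   survives taking the infimum or the supremum over sigma.  The only
   compactness argument is the classical one showing that Nst dominates a
   positive multiple of the Euclidean norm, so that the infimum in kappa is
   positive. *)

Set Implicit Arguments.
Unset Strict Implicit.
Unset Printing Implicit Defensive.
Import Order.TTheory GRing.Theory Num.Theory.
Local Open Scope classical_set_scope.
Local Open Scope ring_scope.

Section Euclid.
Variables (R : realType) (n : nat).
Implicit Types (x : 'cV[R]_n) (a : R).

Lemma euclid_ge0 x : 0 <= euclid x.
Proof. exact: sqrtr_ge0. Qed.

Lemma euclid_sqr x : euclid x ^+ 2 = \sum_(i < n) x i 0 ^+ 2.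
Proof. by rewrite sqr_sqrtr // sumr_ge0 // => i _; rewrite sqr_ge0. Qed.

Lemma euclidZ a x : euclid (a *: x) = `|a| * euclid x.
Proof.
rewrite /euclid -sqrtr_sqr -sqrtrM ?sqr_ge0 // mulr_sumr.
by congr Num.sqrt; apply: eq_bigr => i _; rewrite mxE exprMn.
Qed.

Lemma euclid0 : euclid (0 : 'cV[R]_n) = 0.
Proof. by rewrite -(scale0r 0) euclidZ normr0 mul0r. Qed.

Lemma euclid_eq0 x : (euclid x == 0) = (x == 0).
Proof.
apply/eqP/eqP => [x0|->]; last exact: euclid0.
have sum0 : \sum_(i < n) x i 0 ^+ 2 = 0 by rewrite -euclid_sqr x0 expr0n.
apply/matrixP => i j; rewrite ord1 mxE; apply/eqP; rewrite -sqrf_eq0; apply/eqP.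
by move/psumr_eq0P : sum0; apply=> // k _; exact: sqr_ge0.
Qed.

Lemma euclid_gt0 x : (0 < euclid x) = (x != 0).
Proof. by rewrite lt_neqAle euclid_ge0 andbT eq_sym euclid_eq0. Qed.

Lemma coord_le_euclid x i : `|x i 0| <= euclid x.
Proof.
rewrite -(ler_pXn2r (n := 2)) // ?nnegrE ?euclid_ge0 //.
rewrite euclid_sqr real_normK ?num_real //.
by rewrite (bigD1 i) //= lerDl sumr_ge0 // => k _; exact: sqr_ge0.
Qed.

End Euclid.

Section Norm.
Variables (R : realType) (n : nat) (N : 'cV[R]_n -> R).
Hypothesis normN : is_norm N.
Implicit Types (x y : 'cV[R]_n).

Lemma normZ (a : R) x : N (a *: x) = `|a| * N x.
Proof. by case: normN. Qed.

Lemma normD x y : N (x + y) <= N x + N y.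
Proof. by case: normN. Qed.

Lemma norm_eq0 x : (N x == 0) = (x == 0).
Proof.
apply/eqP/eqP => [|->]; first by case: normN => + _ _; apply.
by rewrite -(scale0r 0) normZ normr0 mul0r.
Qed.

Lemma norm0 : N 0 = 0.
Proof. by apply/eqP; rewrite norm_eq0. Qed.

Lemma normNv x : N (- x) = N x.
Proof. by rewrite -scaleN1r normZ normrN normr1 mul1r. Qed.

Lemma norm_ge0 x : 0 <= N x.
Proof.
by have := normD x (- x); rewrite subrr normNv norm0; lra.
Qed.

Lemma norm_gt0 x : (0 < N x) = (x != 0).
Proof. by rewrite lt_neqAle norm_ge0 andbT eq_sym norm_eq0. Qed.

Lemma norm_dist x y : `|N x - N y| <= N (x - y).
Proof.
have := normD (x - y) y; have := normD (y - x) x.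
rewrite !subrK -opprB normNv ler_norml; lra.
Qed.

Lemma norm_sum (I : finType) (F : I -> 'cV[R]_n) :
  N (\sum_i F i) <= \sum_i N (F i).
Proof.
elim/big_ind2 : _ => //; first by rewrite norm0.
by move=> u a v b uv ub; apply: le_trans (normD _ _) _; exact: lerD.
Qed.

Lemma norm_le_coord_bound x (b : R) : (forall i, `|x i 0| <= b) ->
  N x <= (\sum_(i < n) N (delta_mx i 0)) * b.
Proof.
move=> xb; rewrite {1}(matrix_sum_delta x) mulr_suml.
under eq_bigr do rewrite big_ord1.
apply: le_trans (norm_sum _) _; apply: ler_sum => i _.
by rewrite normZ mulrC ler_wpM2l ?norm_ge0.
Qed.

End Norm.

Section NormEquivalence.
Import numFieldNormedType.Exports.

Lemma mx_entry_le_norm (R : realType) p q (M : 'M[R]_(p, q)) i j :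
  `|M i j| <= `|M|.
Proof.
by rewrite [leRHS]/Num.norm /= mx_normrE; apply/bigmax_geP; right; exists (i, j).
Qed.

Lemma lipschitz_continuous (R : realType) (V : normedModType R) (f : V -> R)
    (k : R) :
  (forall u v, `|f u - f v| <= k * `|u - v|) -> continuous f.
Proof.
move=> f_lip u; apply/(@cvgrPdist_lt _ _ _ (nbhs u)) => e e_gt0.
have k1_gt0 : 0 < `|k| + 1 by rewrite ltr_wpDl.
near=> v; apply: le_lt_trans (f_lip u v) _.
apply: (@le_lt_trans _ _ (`|k| * `|u - v|)); first by rewrite ler_wpM2r ?ler_norm.
have : `|u - v| < e / (`|k| + 1).
  by near: v; apply: cvgr_dist_lt; [exact: cvg_id | rewrite divr_gt0].
rewrite ltr_pdivlMr //; have := normr_ge0 (u - v); have := normr_ge0 k; nra.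
Unshelve. all: by end_near.
Qed.

Lemma rV_unit_sphere_compact (R : realType) k :
  compact [set v : 'rV[R]_k | `|v| = 1].
Proof.
apply: bounded_closed_compact.
  exists 1; split; first exact: num_real.
  by move=> M M_gt1 v /= ->; exact: ltW.
have -> : [set v : 'rV[R]_k | `|v| = 1] = Num.norm @^-1` [set 1] by [].
by apply: preimage_closed; [move=> v _; exact: norm_continuous | exact: closed_eq].
Qed.

Lemma rV_unit_sphere_neq0 (R : realType) k :
  [set v : 'rV[R]_k.+1 | `|v| = 1] !=set0.
Proof.
pose v : 'rV[R]_k.+1 := const_mx 1.
have v_neq0 : `|v| != 0.
  rewrite normr_eq0; apply/negP => /eqP/matrixP/(_ 0 0).
  by rewrite !mxE => /eqP; rewrite oner_eq0.
by exists (`|v|^-1 *: v); rewrite /= normrZ normrV ?unitfE // normr_id mulVf.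
Qed.

Lemma euclid_le_mx_norm (R : realType) n (x : 'cV[R]_n) :
  euclid x <= n%:R * `|x^T|.
Proof.
have xT_ge0 : 0 <= n%:R * `|x^T| by rewrite mulr_ge0.
rewrite -(ler_pXn2r (n := 2)) ?nnegrE ?euclid_ge0 // euclid_sqr exprMn.
apply: (@le_trans _ _ (\sum_(i < n) `|x^T| ^+ 2)).
  apply: ler_sum => i _; rewrite -real_normK ?num_real // lerXn2r ?nnegrE //.
  by have := mx_entry_le_norm x^T 0 i; rewrite mxE.
rewrite sumr_const card_ord -[leLHS]mulr_natl ler_wpM2r ?sqr_ge0 //.
by rewrite -natrX ler_nat; case: (n) => // k; rewrite expnS leq_pmulr.
Qed.

Lemma norm_ge_euclid (R : realType) n (N : 'cV[R]_n -> R) : is_norm N ->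
  exists2 d : R, 0 < d & forall x, d * euclid x <= N x.
Proof.
(* The library only provides compactness of bounded closed sets of row
   vectors, whence the detour through transposes. *)
case: n N => [|k] N normN.
  by exists 1 => // x; rewrite flatmx0 euclid0 mulr0 norm_ge0.
pose f (v : 'rV[R]_k.+1) := N v^T.
have f_cont : continuous f.
  apply: (@lipschitz_continuous _ _ f (\sum_(i < k.+1) N (delta_mx i 0))) => u v.
  apply: le_trans (norm_dist normN _ _) _; rewrite -linearB /=.
  by apply: norm_le_coord_bound => // i; rewrite mxE; exact: mx_entry_le_norm.
have [c /set_mem c_unit c_min] := compact_EVT_min (@rV_unit_sphere_neq0 R k)
  (@rV_unit_sphere_compact R k.+1) (continuous_subspaceT f_cont).
have fc_gt0 : 0 < f c.
  rewrite /f norm_gt0 //; apply: contra_eq_neq c_unit => /(congr1 trmx).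
  by rewrite trmxK trmx0 => ->; rewrite normr0 eq_sym oner_eq0.
have f_min x : f c * `|x^T| <= N x.
  have [->|x_neq0] := eqVneq x 0; first by rewrite trmx0 normr0 mulr0 norm_ge0.
  have xT_gt0 : 0 < `|x^T|.
    rewrite normr_gt0; apply: contra_neq x_neq0 => /(congr1 trmx).
    by rewrite trmxK trmx0.
  have x_unit : `|x^T|^-1 *: x^T \in [set v | `|v| = 1].
    by rewrite inE /= normrZ normfV normr_id mulVf ?gt_eqF.
  have := c_min _ x_unit; rewrite /f linearZ /= trmxK normZ // ger0_norm.
    by rewrite ler_pdivlMl // mulrC.
  by rewrite invr_ge0 ltW.
exists (f c / k.+1%:R); first by rewrite divr_gt0.
move=> x; apply: le_trans (f_min x); rewrite -mulrA ler_pM2l // mulrC ler_pdivrMr //.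
by rewrite mulrC euclid_le_mx_norm.
Qed.

End NormEquivalence.

Section Eccentricity.
Variables (R : realType) (n : nat) (N : 'cV[R]_n -> R).
Hypothesis normN : is_norm N.
Implicit Types x y : 'cV[R]_n.

Let unit_norms := [set N x | x in [set x : 'cV[R]_n | euclid x = 1]].

Let normalize x := (euclid x)^-1 *: x.

Let euclid_normalize x : x != 0 -> euclid (normalize x) = 1.
Proof.
rewrite -euclid_gt0 => x_gt0.
by rewrite euclidZ normfV ger0_norm ?mulVf ?gt_eqF ?ltW.
Qed.

Let norm_normalize x : N x = euclid x * N (normalize x).
Proof.
have [->|x_neq0] := eqVneq x 0; first by rewrite euclid0 mul0r (norm0 normN).
have x_gt0 : 0 < euclid x by rewrite euclid_gt0.
by rewrite normZ // ger0_norm ?invr_ge0 ?ltW // mulrA mulfV ?gt_eqF ?mul1r.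
Qed.

Let inf_unit_norms_le x : inf unit_norms * euclid x <= N x.
Proof.
have [->|x_neq0] := eqVneq x 0; first by rewrite euclid0 mulr0 norm_ge0.
rewrite [leRHS]norm_normalize mulrC ler_wpM2l ?euclid_ge0 //.
apply: ge_inf; last by exists (normalize x) => //; exact: euclid_normalize.
by exists 0 => _ [v _ <-]; exact: norm_ge0.
Qed.

Let norm_le_sup_unit_norms x : N x <= sup unit_norms * euclid x.
Proof.
have [->|x_neq0] := eqVneq x 0; first by rewrite euclid0 mulr0 (norm0 normN).
rewrite [leLHS]norm_normalize mulrC ler_wpM2r ?euclid_ge0 //.
apply: sup_upper_bound; last by exists (normalize x) => //; exact: euclid_normalize.
split.
  by exists (N (normalize x)), (normalize x) => //; exact: euclid_normalize.
exists (\sum_(i < n) N (delta_mx i 0)) => _ [v v_unit <-].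
rewrite -[leRHS]mulr1 -v_unit.
by apply: norm_le_coord_bound => // i; exact: coord_le_euclid.
Qed.

Let inf_unit_norms_gt0 x : x != 0 -> 0 < inf unit_norms.
Proof.
move=> x_neq0; have [d d_gt0 d_le] := norm_ge_euclid normN.
apply: lt_le_trans d_gt0 _; apply: lb_le_inf.
  by exists (N (normalize x)), (normalize x) => //; exact: euclid_normalize.
by move=> _ [v v_unit <-]; have := d_le v; rewrite v_unit mulr1.
Qed.

Lemma euclid_le_kappa x y (r : R) : 0 <= r -> N y <= r * N x ->
  euclid y <= kappa N * r * euclid x.
Proof.
move=> r_ge0 Ny_le; have [x0|x_neq0] := eqVneq x 0.
  have /eqP : N y = 0.
    apply/le_anti; rewrite norm_ge0 // andbT.
    by move: Ny_le; rewrite x0 (norm0 normN) mulr0.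
  by rewrite norm_eq0 // => /eqP ->; rewrite x0 euclid0 mulr0.
have inf_gt0 := inf_unit_norms_gt0 x_neq0.
rewrite /kappa -/unit_norms -(ler_pM2l inf_gt0).
have -> : inf unit_norms * (sup unit_norms / inf unit_norms * r * euclid x) =
          r * (sup unit_norms * euclid x) by field; rewrite gt_eqF.
apply: le_trans (inf_unit_norms_le y) _; apply: le_trans Ny_le _.
by rewrite ler_wpM2l.
Qed.

Lemma kappa_ge1 x : x != 0 -> 1 <= kappa N.
Proof.
rewrite -euclid_gt0 => x_gt0; rewrite -(ler_pM2r x_gt0) mul1r.
by have := @euclid_le_kappa x x 1 ler01; rewrite !mul1r mulr1; apply.
Qed.

End Eccentricity.

Section ExtendedRealBounds.
Variable R : realType.
Local Open Scope ereal_scope.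

Lemma nneseries_geometric_le (K rho : R) : (0 <= K)%R -> (0 <= rho < 1)%R ->
  \sum_(0 <= t <oo) (K * rho ^+ t)%:E <= (K / (1 - rho))%:E.
Proof.
move=> K_ge0 /andP[rho_ge0 rho_lt1].
apply: lime_le.
  by apply: is_cvg_nneseries => t _ _; rewrite lee_fin mulr_ge0 ?exprn_ge0.
apply: nearW => k; rewrite sumEFin lee_fin.
have := geometric_seriesE K (negbT (lt_eqF rho_lt1)).
rewrite seriesEnat => /(congr1 (fun u => u k)) /= ->.
apply: ler_wpM2r; first by rewrite invr_ge0 subr_ge0 ltW.
rewrite -[leRHS]mulr1; apply: ler_wpM2l => //.
by rewrite lerBlDr lerDl exprn_ge0.
Qed.

Lemma nneseries_le_geometric_shift (a b : nat -> R) (K rho : R) :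
  (forall t, 0 <= a t)%R -> (forall t, 0 <= b t)%R ->
  (0 <= K)%R -> (0 <= rho < 1)%R ->
  (forall t, a t <= b t + K * rho ^+ t)%R ->
  \sum_(0 <= t <oo) (a t)%:E <= \sum_(0 <= t <oo) (b t)%:E + (K / (1 - rho))%:E.
Proof.
move=> a_ge0 b_ge0 K_ge0 rho01 ab.
apply: (@le_trans _ _ (\sum_(0 <= t <oo) ((b t)%:E + (K * rho ^+ t)%:E))).
  by apply: lee_nneseries => t; rewrite ?lee_fin // -EFinD lee_fin.
case/andP: (rho01) => rho_ge0 _.
rewrite nneseriesD => [|t _ _|t _ _]; rewrite ?lee_fin ?mulr_ge0 ?exprn_ge0 //.
by rewrite leeD2l // nneseries_geometric_le.
Qed.

Lemma ereal_inf_le_shift (I : Type) (f g : I -> \bar R) (d : R) :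
  (forall i, f i <= g i + d%:E) ->
  ereal_inf (range f) <= ereal_inf (range g) + d%:E.
Proof.
move=> fg; rewrite -leeBlDr //; apply: le_ereal_inf_tmp => _ [i _ <-].
by rewrite leeBlDr //; apply: le_trans (fg i); apply: ereal_inf_lbound; exists i.
Qed.

Lemma ereal_sup_le_shift (I : Type) (f g : I -> \bar R) (d : R) :
  (forall i, f i <= g i + d%:E) ->
  ereal_sup (range f) <= ereal_sup (range g) + d%:E.
Proof.
move=> fg; apply: ge_ereal_sup => _ [i _ <-]; apply: le_trans (fg i) _.
by rewrite leeD2r //; apply: ereal_sup_ubound; exists i.
Qed.

End ExtendedRealBounds.

Section SwitchedCost.
Variables (R : realType) (n m : nat) (A : 'I_m -> 'M[R]_n).
Implicit Types (x y : 'cV[R]_n) (sigma : nat -> 'I_m).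

Lemma trajB sigma x y t :
  traj A sigma (x - y) t = traj A sigma x t - traj A sigma y t.
Proof. by elim: t => [|t IHt] //=; rewrite IHt mulmxBr. Qed.

Variables (N : 'cV[R]_n -> R) (rho : R).
Hypothesis normN : is_norm N.
Hypothesis traj_contract :
  forall sigma x t, N (traj A sigma x t) <= rho ^+ t * N x.

Lemma contraction_rate_ge0 sigma x : x != 0 -> 0 <= rho.
Proof.
rewrite -(norm_gt0 normN) => Nx_gt0.
have := le_trans (norm_ge0 normN _) (traj_contract sigma x 1).
by rewrite expr1 pmulr_lge0.
Qed.

Variables (c : 'cV[R]_n -> R) (X : set 'cV[R]_n) (L eta : R).
Hypothesis c_ge0 : forall x, 0 <= c x.
Hypothesis c_lip : forall x y, X x -> X y -> `|c x - c y| <= L * euclid (x - y).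
Hypothesis rho_lt1 : rho < 1.
Hypothesis ball_sub : [set x | N x <= eta] `<=` X.

Lemma traj_in_ball sigma x t : 0 <= rho -> N x <= eta -> X (traj A sigma x t).
Proof.
move=> rho_ge0 Nx_le; apply: ball_sub; apply: le_trans (traj_contract _ _ _) _.
apply: le_trans Nx_le; rewrite ler_piMl ?norm_ge0 //.
by rewrite exprn_ile1 // ltW.
Qed.

Lemma Jcost_lipschitz sigma x y : N x <= eta -> N y <= eta ->
  (Jcost A c x sigma <= Jcost A c y sigma
                        + (kappa N * L / (1 - rho) * euclid (x - y))%:E)%E.
Proof.
(* The signs of rho, L and kappa N are not assumed: they are read off the
   nonzero vector x - y. *)
move=> Nx_le Ny_le; have [<-|x_neq_y] := eqVneq x y.
  by rewrite subrr euclid0 mulr0 adde0.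
have z_neq0 : x - y != 0 by rewrite subr_eq0.
have rho_ge0 := contraction_rate_ge0 sigma z_neq0.
have L_ge0 : 0 <= L.
  have := le_trans (normr_ge0 _) (c_lip (ball_sub Nx_le) (ball_sub Ny_le)).
  by rewrite pmulr_lge0 ?euclid_gt0.
have kappa_ge0 : 0 <= kappa N := le_trans ler01 (kappa_ge1 normN z_neq0).
rewrite mulrAC; apply: nneseries_le_geometric_shift => //.
- by apply: mulr_ge0; [exact: mulr_ge0 | exact: euclid_ge0].
- by rewrite rho_ge0.
move=> t; set z := x - y.
have c_diff_le := c_lip (traj_in_ball sigma t rho_ge0 Nx_le)
  (traj_in_ball sigma t rho_ge0 Ny_le).
rewrite -trajB -/z in c_diff_le.
have traj_z_le :=
  euclid_le_kappa normN (exprn_ge0 t rho_ge0) (traj_contract sigma z t).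
have := ler_wpM2l L_ge0 traj_z_le.
have := ler_norm (c (traj A sigma x t) - c (traj A sigma y t)).
lra.
Qed.

End SwitchedCost.

Theorem theorem2 (R : realType) (n m : nat) (A : 'I_m -> 'M[R]_n)
  (c : 'cV[R]_n -> R) (X : set 'cV[R]_n) (L rho eta : R)
  (Nst : 'cV[R]_n -> R) :
  JSR A < 1 ->
  (forall x, 0 <= c x) ->
  (exists r : R, 0 < r /\ forall x, euclid x < r -> X x) ->
  (forall x y, X x -> X y -> `|c x - c y| <= L * euclid (x - y)) ->
  rho < 1 ->
  is_norm Nst ->
  (forall (sigma : nat -> 'I_m) (x : 'cV[R]_n) (t : nat),
      Nst (traj A sigma x t) <= rho ^+ t * Nst x) ->
  0 < eta ->
  [set x | Nst x <= eta] `<=` X ->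
  let M := kappa Nst * L / (1 - rho) in
  forall x y, Nst x <= eta -> Nst y <= eta ->
    (Jstar A c x <= Jstar A c y + (M * euclid (x - y))%:E)%E /\
    (Jcirc A c x <= Jcirc A c y + (M * euclid (x - y))%:E)%E.
Proof.
move=> _ c_ge0 _ c_lip rho_lt1 normN traj_contract _ ball_sub M x y Nx_le Ny_le.
have J_lip sigma := Jcost_lipschitz normN traj_contract c_ge0 c_lip rho_lt1
  ball_sub sigma Nx_le Ny_le.
by split; [exact: ereal_inf_le_shift | exact: ereal_sup_le_shift].
Qed.
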